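(* Let $K=\mathrm{GF}(2)(x)[Y]/(Y^2+xY+1)$ and $\rho$ the residue class of $Y$. For every $k\ge1$, $$x\,f^{(2k-2)}(x,1)=x\,f^{(2k-1)}(x,1)=(1+\rho)\rho^k+(1+\rho^{-1})\rho^{-k}.$$
   Context: $\mathbb{F}=\mathrm{GF}(2)$, $R=\mathbb{F}[x,z]$, $|\cdot|$ is total degree. Let $(r_0,r_1,\ldots)$ be the binary sequence with $r_i=1$ if $i=2^j-1$ for some $j\ge 0$ and $r_i=0$ otherwise. For $n\ge1$ its inverse form is $R^{(1-n)}=\sum_{j=1-n}^{0}r_{-j}\,x^{j}z^{1-n-j}\in\mathbb{F}[x^{-1},z^{-1}]$. For a form $f\in R$ and such a form $G$, $\Delta(f;G)$ is the coefficient of $x^{|f|+|G|}z^0$ in $f\cdot G$ computed in $\mathbb{F}[x^{\pm1},z^{\pm1}]$ if $|f|+|G|\le 0$, and $0$ otherwise. Define forms recursively: $(f^{(0)},g^{(0)})=(x+z,z)$; for $k\ge0$ let $d_k=|g^{(k)}|-|f^{(k)}|$ and $\Delta_k=\Delta(f^{(k)};R^{(-1-k)})$, and set $(f^{(k+1)},g^{(k+1)})=(f^{(k)},zg^{(k)})$ if $\Delta_k=0$; $=(f^{(k)}+x^{-d_k}g^{(k)},\,zg^{(k)})$ if $\Delta_k=1$ and $d_k\le0$; $=(x^{d_k}f^{(k)}+g^{(k)},\,zf^{(k)})$ if $\Delta_k=1$ and $d_k>0$. *)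

From HB Require Import structures.
From mathcomp Require Import all_boot all_order all_algebra.
From mathcomp Require Import fraction.
From mathcomp Require Import mpoly.

Set Implicit Arguments.
Unset Strict Implicit.
Unset Printing Implicit Defensive.

Import Order.TTheory GRing.Theory Num.Theory.
Local Open Scope ring_scope.

Notation F := 'F_2.

(* Forms: elements of R = F[x,z], variable 0 is x, variable 1 is z. *)
Notation form := {mpoly F[2]}.
Definition xi : 'I_2 := ord0.
Definition zi : 'I_2 := ord_max.

(* Total degree |f| (msize f = 1 + total degree for f <> 0). *)
Definition tdeg (f : form) : nat := (msize f).-1.

(* r_i = 1 iff i = 2^j - 1 for some j >= 0, i.e. i+1 is a power of 2
   (such a j is necessarily < i+2). *)
Definition r (i : nat) : F :=
  if [exists j : 'I_(i.+2), i.+1 == (2 ^ j)%N] then 1 else 0.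

(* Coefficient of x^a z^b in the inverse form
   R^(1-n) = sum_{j=1-n}^{0} r_{-j} x^j z^{1-n-j}  (a Laurent form). *)
Definition Rinv_coef (n : nat) (a b : int) : F :=
  if ((1 - n%:Z <= a) && (a <= 0)) && (a + b == 1 - n%:Z)
  then r `|a|%N else 0.

Definition Rinv_deg (n : nat) : int := 1 - n%:Z.

(* Delta(f; R^(1-n)): the coefficient of x^(|f|+|G|) z^0 in f*G
   computed in F[x^+-1, z^+-1] if |f|+|G| <= 0, and 0 otherwise.
   The coefficient of x^e z^0 in f*G is
   sum over monomials m of f of f_m * G_{(e - m_x, 0 - m_z)}. *)
Definition Delta (f : form) (n : nat) : F :=
  let e := (tdeg f)%:Z + Rinv_deg n in
  if e <= 0 then
    \sum_(m <- msupp f) f@_m * Rinv_coef n (e - (m xi)%:Z) (0 - (m zi)%:Z)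
  else 0.

(* The recursion: fg k = (f^(k), g^(k)). *)
Fixpoint fg (k : nat) : form * form :=
  match k with
  | 0 => ('X_xi + 'X_zi, 'X_zi)
  | k'.+1 =>
    let: (f, g) := fg k' in
    let d : int := (tdeg g)%:Z - (tdeg f)%:Z in
    if Delta f (k'.+2) == 0 then (f, 'X_zi * g)          (* R^(-1-k') = R^(1-(k'+2)) *)
    else if d <= 0 then (f + 'X_xi ^+ `|d|%N * g, 'X_zi * g)
    else ('X_xi ^+ `|d|%N * f + g, 'X_zi * f)
  end.

Definition fk (k : nat) : form := (fg k).1.
Definition gk (k : nat) : form := (fg k).2.

(* Dehomogenisation f(x,1) in F[x]. *)
Definition at_z1 (f : form) : {poly F} :=
  mmap (@polyC F) (fun i : 'I_2 => if i == xi then 'X else 1) f.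

Notation Fx := {fraction {poly F}}.
Definition minP : {poly Fx} := 'X^2 + (tofrac 'X)%:P * 'X + 1.
Notation K := {poly %/ minP}.
Definition rho : K := 'qX.

Definition toK (p : {poly F}) : K := (tofrac p)%:A.

From HB Require Import structures.
From mathcomp Require Import all_boot all_order all_algebra.
From mathcomp Require Import fraction mpoly.
From mathcomp Require Import zify ring.
Import GRing.Theory.
Local Open Scope ring_scope.

(* Let P_0 = 1, P_1 = x + 1, P_(n+2) = x P_(n+1) + P_n in GF(2)[x], and let
   F_n be its homogenisation: F_0 = 1, F_1 = x + z, F_(n+2) = x F_(n+1) + z^2 F_n,
   a nonzero form of degree n with F_n(x,1) = P_n.  The theorem follows from:

   1. The recursion is explicit:  (f^(2n), g^(2n)) = (F_(n+1), z F_n)  and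
      (f^(2n+1), g^(2n+1)) = (F_(n+1), z^2 F_n).  This needs only the two
      discrepancies Delta_(2n) = 0 and Delta_(2n+1) = 1.
   2. For a nonzero homogeneous f of degree d < n, Delta(f; R^(1-n)) is the
      pairing  rdot  of the coefficients of f(x,1) with the shifted sequence
      r_(n-d-1), r_(n-d), ...
   3. Over GF(2) the series U = sum_i r_i x^i satisfies x U^2 = U + 1 (since
      r_0 = 1, r_(2i+1) = r_i, r_(2i+2) = 0).  With the recurrence of P_n this
      gives  sum_i (P_n)_i r_(c+i) = [x^(c+1)] x^(n+1) U^(2n+1),  which
      evaluates both discrepancies.  Power series are represented by their
      truncations  Utr N  and compared through "agree up to x^N".
   4. In K, rho and rho^-1 = rho + x are the roots of t^2 = x t + 1, so
      x P_k and (1+rho) rho^k + (1+rho^-1) rho^-k satisfy the same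
      second-order recurrence with the same initial values. *)

Lemma nat_ind2 (Q : nat -> Prop) :
  Q 0 -> Q 1 -> (forall n, Q n -> Q n.+1 -> Q n.+2) -> forall n, Q n.
Proof.
move=> Q0 Q1 QS n; suff [] : Q n /\ Q n.+1 by [].
by elim: n => [|n [Qn Qn1]]; split; last exact: QS.
Qed.

Lemma rec2_uniq (R : nzRingType) (a : R) (u v : nat -> R) :
  u 0 = v 0 -> u 1 = v 1 ->
  (forall n, u n.+2 = a * u n.+1 + u n) ->
  (forall n, v n.+2 = a * v n.+1 + v n) -> u =1 v.
Proof.
by move=> u0 u1 urec vrec; elim/nat_ind2 => [||n e0 e1] //; rewrite urec vrec e0 e1.
Qed.

Lemma sqrD_char2 (R : comNzRingType) (a b : R) :
  2 \in [pchar R] -> (a + b) ^+ 2 = a ^+ 2 + b ^+ 2.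
Proof. by move=> ch2; rewrite sqrrD mulr2n addrr_pchar2 // addr0. Qed.

Lemma char2_F : 2 \in [pchar F]. Proof. exact: pchar_Fp. Qed.

Lemma char2_poly : 2 \in [pchar {poly F}]. Proof. by rewrite (pchar_poly F 2) char2_F. Qed.

Lemma r01 i : r i = 0 \/ r i = 1.
Proof. by rewrite /r; case: ifP; [right|left]. Qed.

Lemma r_idem i : r i * r i = r i.
Proof. by case: (r01 i) => ->; rewrite ?mulr0 ?mulr1. Qed.

Lemma r0 : r 0 = 1.
Proof. by rewrite /r; case: ifP => // /negbT/existsP []; exists ord0. Qed.

Lemma r_even i : r (2 * i + 2) = 0.
Proof.
rewrite /r; case: ifP => // /existsP [[[|j] hj]] /= /eqP; rewrite ?expn0 ?expnS; lia.
Qed.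

Lemma r_odd i : r (2 * i + 1) = r i.
Proof.
rewrite /r; congr (if _ then _ else _); apply/existsP/existsP.
- case=> [[[|j] hj]] /= /eqP; rewrite ?expn0 ?expnS => e; first lia.
  have hjl : (j < 2 ^ j)%N by apply: ltn_expl.
  have hji : (j < i.+2)%N by lia.
  by exists (Ordinal hji); apply/eqP => /=; lia.
- case=> [[j hj]] /= /eqP e.
  have hjl : (j < 2 ^ j)%N by apply: ltn_expl.
  have hji : (j.+1 < (2 * i + 1).+2)%N by lia.
  by exists (Ordinal hji); apply/eqP => /=; rewrite expnS; lia.
Qed.

Fixpoint P (n : nat) : {poly F} :=
  match n with
  | 0 => 1
  | 1 => 'X + 1
  | (m.+1 as k).+1 => 'X * P k + P m
  end.

Lemma P_rec n : P n.+2 = 'X * P n.+1 + P n. Proof. by []. Qed.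

Lemma size_P n : (size (P n) <= n.+1)%N.
Proof.
elim/nat_ind2: n => [||n IH0 IH1]; first by rewrite size_poly1.
  by rewrite size_XaddC.
have := size_polyMleq 'X (P n.+1); rewrite size_polyX => sizeXP.
by rewrite P_rec (leq_trans (size_polyD _ _)) // geq_max; apply/andP; split; lia.
Qed.

Lemma coef0_P n : (P n)`_0 = 1.
Proof.
elim/nat_ind2: n => [||n IH0 _]; first by rewrite coef1.
  by rewrite coefD coefX coef1 add0r.
by rewrite P_rec coefD coefXM add0r.
Qed.

Lemma P_neq0 n : P n != 0.
Proof. by apply: contra_neq (@oner_neq0 F) => Pn0; rewrite -(coef0_P n) Pn0 coef0. Qed.

Definition Utr (N : nat) : {poly F} := \poly_(i < N) r i.

Definition agree (N : nat) (p q : {poly F}) := forall i, (i < N)%N -> p`_i = q`_i.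

Lemma agreeD {N} {p q p' q' : {poly F}} :
  agree N p q -> agree N p' q' -> agree N (p + p') (q + q').
Proof. by move=> e e' i hi; rewrite !coefD e ?e'. Qed.

Lemma agreeM {N} {p q p' q' : {poly F}} :
  agree N p q -> agree N p' q' -> agree N (p * p') (q * q').
Proof.
move=> e e' i hi; rewrite !coefM; apply: eq_bigr => [[k hk]] _ /=.
by rewrite e ?e' //; lia.
Qed.

Lemma agreeX {N} {p q : {poly F}} k : agree N p q -> agree N (p ^+ k) (q ^+ k).
Proof. by move=> e; elim: k => [|k IH]; rewrite ?expr0 // !exprS; apply: agreeM. Qed.

Lemma coef_Utr N i : (i < N)%N -> (Utr N)`_i = r i.
Proof. by move=> hi; rewrite coef_poly hi. Qed.

Lemma coef_Utr_indep N N' a k i : (i < N)%N -> (i < N')%N ->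
  ('X^a * Utr N ^+ k)`_i = ('X^a * Utr N' ^+ k)`_i.
Proof.
move=> hN hN'; apply: (@agreeM (minn N N') _ _ _ _) => [//||]; last by rewrite leq_min hN.
by apply: agreeX => j hj; rewrite !coef_poly; case: ifP; case: ifP => //; lia.
Qed.

(* Frobenius: U^2 = sum_i r_i x^(2i). *)
Lemma Utr_sqr N : Utr N ^+ 2 = \sum_(i < N) r i *: 'X^(2 * i).
Proof.
rewrite /Utr poly_def; elim: N => [|N IH]; first by rewrite !big_ord0 expr0n.
rewrite !big_ord_recr /= sqrD_char2 ?char2_poly // IH exprZn expr2 r_idem.
by rewrite -exprM mulnC.
Qed.

Lemma Utr_quadratic N : agree N ('X * Utr N ^+ 2) (Utr N + 1).
Proof.
move=> j hj; rewrite Utr_sqr mulr_sumr.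
under eq_bigr do rewrite -scalerAr -exprS.
rewrite coef_sumMXn coefD coef1 coef_Utr //.
case: j hj => [|j] hj.
  by rewrite big1 ?r0 ?addrr_pchar2 ?char2_F // => i /eqP; lia.
rewrite addr0; have := odd_double_half j; case: (odd j) => /= ej.
  have -> : j.+1 = (2 * j./2 + 2)%N by lia.
  by rewrite r_even big1 // => i /eqP; lia.
have hk : (j./2 < N)%N by lia.
rewrite (bigD1 (Ordinal hk)) /=; last by apply/eqP; lia.
rewrite big1 ?addr0; first by rewrite -(r_odd j./2); congr r; lia.
by move=> i /andP [/eqP ei /eqP []]; apply: val_inj => /=; lia.
Qed.

(* Hence  x^2 U^(k+4) = U^(k+2) + U^k,  as (x U^2)^2 = (U + 1)^2 = U^2 + 1. *)
Lemma Utr_shift N k :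
  agree N ('X^2 * Utr N ^+ k.+4) (Utr N ^+ k.+2 + Utr N ^+ k).
Proof.
set U := Utr N.
have -> : 'X^2 * U ^+ k.+4 = ('X * U ^+ 2) ^+ 2 * U ^+ k.
  by rewrite exprMn -exprM -[RHS]mulrA -exprD.
have -> : U ^+ k.+2 + U ^+ k = (U + 1) ^+ 2 * U ^+ k.
  by rewrite sqrD_char2 ?char2_poly // expr1n mulrDl mul1r -exprD.
by apply: agreeM => //; apply/agreeX/Utr_quadratic.
Qed.

Lemma Utr_cube N : agree N ('X^2 * Utr N ^+ 3) ('X * Utr N + (Utr N + 1)).
Proof.
have -> : 'X^2 * Utr N ^+ 3 = ('X * Utr N) * ('X * Utr N ^+ 2) by ring.
move=> i hi; rewrite (agreeM (fun _ _ => erefl) (@Utr_quadratic N)) //.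
rewrite mulrDr mulr1 -mulrA -expr2 addrC.
by apply: agreeD (fun _ _ => erefl) (@Utr_quadratic N) _ _.
Qed.

Definition rdot (M : nat) (p : {poly F}) (c : nat) : F :=
  \sum_(i < M) p`_i * r (c + i).

Lemma rdotD M (p q : {poly F}) c : rdot M (p + q) c = rdot M p c + rdot M q c.
Proof. by rewrite /rdot -big_split; apply: eq_bigr => i _; rewrite coefD mulrDl. Qed.

Lemma rdot_mulX M (p : {poly F}) c : rdot M.+1 ('X * p) c = rdot M p c.+1.
Proof.
rewrite /rdot big_ord_recl coefXM mul0r add0r; apply: eq_bigr => i _.
by rewrite coefXM /= addSnnS.
Qed.

Lemma rdot_widen M k (p : {poly F}) c : (size p <= M)%N -> rdot (M + k) p c = rdot M p c.
Proof.
move=> sp; elim: k => [|k IH]; first by rewrite addn0.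
rewrite addnS /rdot big_ord_recr /= -/(rdot _ _ _) IH nth_default ?mul0r ?addr0 //.
exact: leq_trans sp (leq_addr _ _).
Qed.

Lemma rdot_P n c N : (c.+2 <= N)%N ->
  rdot n.+1 (P n) c = ('X^(n.+1) * Utr N ^+ (2 * n).+1)`_c.+1.
Proof.
elim/nat_ind2: n c N => [||n IH0 IH1] c N hN.
- by rewrite /rdot big_ord1 coef1 mul1r expr1 coefXM /= addn0 expr1 coef_Utr //; lia.
- rewrite Utr_cube // /rdot !big_ord_recr big_ord0 /= add0r !coefD coefXM !coefX !coef1.
  by rewrite !coef_Utr /= ?addn0 ?addn1 ?add0r ?addr0 ?mul1r //; lia.
rewrite P_rec rdotD rdot_mulX (IH1 _ c.+3) //.
have -> : rdot n.+3 (P n) c = rdot n.+1 (P n) c.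
  by rewrite -(rdot_widen _ 2 _ c (size_P n)) addn2.
rewrite (IH0 _ c.+3) //.
rewrite (coef_Utr_indep N c.+3) //; set U := Utr c.+3.
rewrite exprS -mulrA coefXM /= -coefD -mulrDr.
(* It remains that  x^(n+3) U^(2n+5) = x^(n+1) (U^(2n+3) + U^(2n+1)). *)
have -> : (2 * n.+2).+1 = ((2 * n).+1).+4 by lia.
have -> : (2 * n.+1).+1 = ((2 * n).+1).+2 by lia.
rewrite -(addn2 n.+1) exprD -mulrA.
by symmetry; apply: (agreeM (fun _ _ => erefl) (Utr_shift _ _)).
Qed.

Lemma rdot_P_below n : rdot n.+2 (P n.+1) n = 0.
Proof. by rewrite (rdot_P _ _ n.+2) // coefXnM ifT. Qed.

Lemma rdot_P_at n : rdot n.+2 (P n.+1) n.+1 = 1.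
Proof.
rewrite (rdot_P _ _ n.+3) // coefXnM ltnn subnn -horner_coef0 horner_exp.
by rewrite horner_coef0 coef_Utr // r0 expr1n.
Qed.

HB.instance Definition _ :=
  GRing.RMorphism.copy toK (GRing.in_alg K \o @tofrac {poly F}).

Lemma char2_K : 2 \in [pchar K]. Proof. exact: (rmorph_pchar toK char2_poly). Qed.

Definition xK : K := toK 'X.

Lemma size_minP_tail :
  (size ((tofrac 'X)%:P * 'X + 1 : {poly Fx})%R < size ('X^2 : {poly Fx}))%N.
Proof.
apply: leq_ltn_trans (size_polyD _ _) _; rewrite size_polyXn gtn_max size_poly1 andbT.
apply: leq_ltn_trans (size_polyMleq _ _) _.
by rewrite size_polyX addn2 /= size_polyC; case: (_ != 0).
Qed.

Lemma minP_monic : minP \is monic.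
Proof. by rewrite /minP -addrA monicE lead_coefDl ?lead_coefXn // size_minP_tail. Qed.

Lemma size_minP : size minP = 3.
Proof. by rewrite /minP -addrA size_polyDl ?size_minP_tail // size_polyXn. Qed.

Lemma rho_root : rho ^+ 2 = xK * rho + 1.
Proof.
have -> : xK = in_qpoly minP (tofrac 'X)%:P.
  by rewrite /xK /toK /= -alg_polyC linearZ /= rmorph1.
apply/eqP; rewrite -subr_eq0 oppr_pchar2 ?char2_K //.
rewrite /rho /qpolyX -rmorphXn -rmorphM -(rmorph1 (in_qpoly minP)) -!rmorphD.
apply/eqP/val_inj => /=; rewrite /mk_monic minP_monic size_minP.
by rewrite addrA; apply: Pdiv.RingMonic.rmodpp minP_monic.
Qed.

Lemma rhoV : rho^-1 = rho + xK.
Proof.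
apply: mulr1_eq; rewrite mulrDr -expr2 rho_root (mulrC rho) -addrA addrC.
by rewrite -addrA addrr_pchar2 ?char2_K // addr0.
Qed.

Lemma rho_add_rhoV : rho + rho^-1 = xK.
Proof. by rewrite rhoV addrA addrr_pchar2 ?char2_K // add0r. Qed.

Lemma rhoV_root : rho^-1 ^+ 2 = xK * rho^-1 + 1.
Proof.
rewrite rhoV sqrD_char2 ?char2_K // rho_root mulrDr (mulrC xK rho) -expr2.
by rewrite addrAC.
Qed.

Lemma roots_rec (R : comNzRingType) (a b c t u : R) :
  t ^+ 2 = a * t + 1 -> u ^+ 2 = a * u + 1 -> forall k,
  b * t ^+ k.+2 + c * u ^+ k.+2 =
    a * (b * t ^+ k.+1 + c * u ^+ k.+1) + (b * t ^+ k + c * u ^+ k).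
Proof.
have root_rec (v : R) k : v ^+ 2 = a * v + 1 -> v ^+ k.+2 = a * v ^+ k.+1 + v ^+ k.
  by move=> vroot; rewrite -addn2 exprD vroot mulrDr mulr1 mulrCA -exprSr.
by move=> troot uroot k; rewrite (root_rec t) // (root_rec u) //; ring.
Qed.

Definition rhoSum (k : nat) : K := (1 + rho) * rho ^+ k + (1 + rho^-1) * rho ^- k.

Lemma rhoSum_rec k : rhoSum k.+2 = xK * rhoSum k.+1 + rhoSum k.
Proof. by rewrite /rhoSum -!exprVn (@roots_rec _ _ _ _ _ _ rho_root rhoV_root). Qed.

Lemma rhoSum0 : rhoSum 0 = xK.
Proof.
rewrite /rhoSum !expr0 invr1 !mulr1 addrACA addrr_pchar2 ?char2_K // add0r.
exact: rho_add_rhoV.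
Qed.

Lemma rhoSum1 : rhoSum 1 = xK * (xK + 1).
Proof.
rewrite /rhoSum !expr1 !mulrDl !mul1r -!expr2 addrACA -sqrD_char2 ?char2_K //.
by rewrite rho_add_rhoV mulrDr mulr1 addrC expr2.
Qed.

Lemma toK_XP k : toK ('X * P k) = rhoSum k.
Proof.
apply: (@rec2_uniq _ xK (fun n => toK ('X * P n)) rhoSum) => [||n|];
  last exact: rhoSum_rec.
- by rewrite rhoSum0 mulr1.
- by rewrite rhoSum1 rmorphM rmorphD rmorph1.
by rewrite P_rec mulrDr rmorphD !rmorphM mulrCA.
Qed.

HB.instance Definition _ := GRing.RMorphism.copy at_z1
  (mmap (@polyC F) (fun i : 'I_2 => if i == xi then 'X else 1)).

Lemma at_z1D (p q : {mpoly F[2]}) : at_z1 (p + q) = at_z1 p + at_z1 q.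
Proof. exact: rmorphD. Qed.

Lemma at_z1M (p q : {mpoly F[2]}) : at_z1 (p * q) = at_z1 p * at_z1 q.
Proof. exact: rmorphM. Qed.

Lemma at_z1X : at_z1 'X_xi = 'X. Proof. by rewrite /at_z1 mmapX mmap1U. Qed.

Lemma at_z1Z : at_z1 'X_zi = 1. Proof. by rewrite /at_z1 mmapX mmap1U. Qed.

Lemma mdeg2 (m : 'X_{1..2}) : mdeg m = (m xi + m zi)%N.
Proof. by rewrite mdegE big_ord_recr big_ord1 /=; congr (m _ + m _); apply: val_inj. Qed.

Lemma at_z1E (f : {mpoly F[2]}) :
  at_z1 f = \sum_(m <- msupp f) (f@_m)%:P * 'X^(m xi).
Proof.
rewrite /at_z1 /mmap; apply: eq_bigr => m _.
rewrite /mmap1 big_ord_recr big_ord1 /= expr1n mulr1.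
by congr (_ * 'X^(m _)); apply: val_inj.
Qed.

Lemma sum_dehomog (f : {mpoly F[2]}) d (G : nat -> F) : f \is d.-homog ->
  \sum_(m <- msupp f) f@_m * G (m xi) = \sum_(i < d.+1) (at_z1 f)`_i * G i.
Proof.
move=> /dhomogP fhomog; rewrite at_z1E.
under [RHS]eq_bigr do rewrite coef_sum mulr_suml.
rewrite exchange_big /=; apply: eq_big_seq => m /fhomog mdegm.
have mx_lt : (m xi < d.+1)%N by have := mdeg2 m; have : mdeg m = d := mdegm; lia.
rewrite (bigD1 (Ordinal mx_lt)) //= coefCM coefXn eqxx mulr1 big1 ?addr0 // => i ne.
rewrite coefCM coefXn; case: eqP => [ei|_]; last by rewrite mulr0 mul0r.
by move/eqP: ne; case; apply: val_inj.
Qed.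

Lemma tdeg_homog {f : {mpoly F[2]}} {d : nat} :
  f != 0 -> f \is d.-homog -> tdeg f = d.
Proof. by move=> f_neq0 /[dup] /dhomog_msize fhomog /(dhomog_uniq f_neq0 fhomog). Qed.

Lemma Delta_homog {f : {mpoly F[2]}} {d : nat} (n : nat) :
  f != 0 -> f \is d.-homog -> (d < n)%N ->
  Delta f n = rdot d.+1 (at_z1 f) (n - d.+1).
Proof.
move=> f_neq0 fhomog d_lt_n.
rewrite /Delta (tdeg_homog f_neq0 fhomog) /Rinv_deg ifT; last by lia.
rewrite /rdot -(sum_dehomog _ _ (fun i => r (n - d.+1 + i)) fhomog).
apply: eq_big_seq => m /(dhomogP _ _ _ fhomog) mdegm.
have := mdeg2 m; have : mdeg m = d := mdegm; move=> mdeg_d mdeg_split.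
rewrite /Rinv_coef ifT; first by congr (_ * r _); lia.
by apply/andP; split; [apply/andP; split|apply/eqP]; lia.
Qed.

Fixpoint Fform (n : nat) : {mpoly F[2]} :=
  match n with
  | 0 => 1
  | 1 => 'X_xi + 'X_zi
  | (m.+1 as k).+1 => 'X_xi * Fform k + 'X_zi * ('X_zi * Fform m)
  end.

Lemma Fform_rec n : Fform n.+2 = 'X_xi * Fform n.+1 + 'X_zi * ('X_zi * Fform n).
Proof. by []. Qed.

Lemma at_z1_Fform n : at_z1 (Fform n) = P n.
Proof.
apply: (@rec2_uniq _ 'X (fun n => at_z1 (Fform n)) P) => [||k|k] //.
- exact: rmorph1.
- by rewrite -[Fform 1]/('X_xi + 'X_zi) at_z1D at_z1X at_z1Z.
by rewrite Fform_rec at_z1D !at_z1M at_z1X at_z1Z !mul1r.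
Qed.

Lemma Fform_neq0 n : Fform n != 0.
Proof. by apply: contra_neq (P_neq0 n) => Fn0; rewrite -at_z1_Fform Fn0 rmorph0. Qed.

Lemma homog_X (i : 'I_2) : ('X_i : {mpoly F[2]}) \is 1%N.-homog.
Proof. by rewrite dhomogX; apply/eqP/mdeg1. Qed.

Lemma homog_Xi (i : 'I_2) (f : {mpoly F[2]}) d :
  f \is d.-homog -> 'X_i * f \is d.+1.-homog.
Proof. exact: dhomogM (homog_X i). Qed.

Lemma Fform_homog n : Fform n \is n.-homog.
Proof.
elim/nat_ind2: n => [||n IH0 IH1]; first exact: dhomog1.
  by rewrite rpredD // homog_X.
by rewrite Fform_rec rpredD // !homog_Xi.
Qed.

Lemma Delta_Fform n N : (n < N)%N -> Delta (Fform n) N = rdot n.+1 (P n) (N - n.+1).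
Proof.
by move=> n_lt_N; rewrite (Delta_homog N (Fform_neq0 n) (Fform_homog n)) // at_z1_Fform.
Qed.

Lemma tdeg_XzXzFform n : tdeg ('X_zi * ('X_zi * Fform n)) = n.+2.
Proof.
apply: tdeg_homog; last exact/homog_Xi/homog_Xi/Fform_homog.
have dehom : at_z1 ('X_zi * ('X_zi * Fform n)) = P n.
  by rewrite !at_z1M at_z1Z !mul1r at_z1_Fform.
by apply: contra_neq (P_neq0 n) => e; rewrite -dehom e rmorph0.
Qed.

Lemma fg_succ k : fg k.+1 =
  let: (f, g) := fg k in
  let d : int := (tdeg g)%:Z - (tdeg f)%:Z in
  if Delta f k.+2 == 0 then (f, 'X_zi * g)
  else if d <= 0 then (f + 'X_xi ^+ `|d|%N * g, 'X_zi * g)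
  else ('X_xi ^+ `|d|%N * f + g, 'X_zi * f).
Proof. by []. Qed.

(* Odd steps: Delta_(2n) = 0, so only g is multiplied by z. *)
Lemma fg_odd n : fg (2 * n) = (Fform n.+1, 'X_zi * Fform n) ->
  fg (2 * n).+1 = (Fform n.+1, 'X_zi * ('X_zi * Fform n)).
Proof.
move=> fg_2n; rewrite fg_succ fg_2n Delta_Fform; last by lia.
have -> : ((2 * n).+2 - n.+2 = n)%N by lia.
by rewrite rdot_P_below eqxx.
Qed.

(* Even steps: Delta_(2n+1) = 1 and d = 1, producing F_(n+2). *)
Lemma fg_even n : fg (2 * n) = (Fform n.+1, 'X_zi * Fform n).
Proof.
elim: n => [|n IH]; first by rewrite /= mulr1.
have -> : (2 * n.+1 = (2 * n).+2)%N by lia.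
rewrite fg_succ (fg_odd _ IH) Delta_Fform; last by lia.
have -> : ((2 * n).+3 - n.+2 = n.+1)%N by lia.
rewrite rdot_P_at oner_eq0 tdeg_XzXzFform (tdeg_homog (Fform_neq0 _) (Fform_homog _)).
have -> : (n.+2%:Z - n.+1%:Z = 1 :> int)%R by lia.
by [].
Qed.

Theorem theorem4 (k : nat) : (1 <= k)%N ->
  toK ('X * at_z1 (fk (2 * k - 2))) =
    (1 + rho) * rho ^+ k + (1 + rho^-1) * rho ^- k /\
  toK ('X * at_z1 (fk (2 * k - 1))) =
    (1 + rho) * rho ^+ k + (1 + rho^-1) * rho ^- k.
Proof.
case: k => [//|j] _.
have -> : (2 * j.+1 - 2 = 2 * j)%N by lia.
have -> : (2 * j.+1 - 1 = (2 * j).+1)%N by lia.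
rewrite /fk (fg_odd _ (fg_even j)) fg_even !at_z1_Fform.
by split; apply: toK_XP.
Qed.
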